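(* Let $k\ge2$, $\varepsilon>0$, and let $r$ be a multiple of $k$ with $r\ge 6/\varepsilon$. Let $R$ be a graph on $[r]$ with $\delta(R)\ge(1-\frac1k+\varepsilon)r$, and let $Q$ be a $K_k$-factor of $R$ consisting of the vertex-disjoint cliques $Q^1,\dots,Q^{r/k}$. Let $D$ be the directed graph on $[r]$ with arc set $\{\overrightarrow{ij}: i\ne j\in[r],\ N_Q(j)\subseteq N_R(i)\}$. Then there exist at least two indices $s\in[r/k]$ such that for every $j\in V(Q^s)$ and every $i\in[r]\setminus\{j\}$ there is a directed path from $i$ to $j$ in $D$.
   Context: $N_Q(j)$ denotes the neighbourhood of $j$ in $Q$ (the other $k-1$ vertices of the clique of $Q$ containing $j$), and $N_R(i)$ the neighbourhood of $i$ in $R$. A $K_k$-factor of $R$ is a spanning subgraph consisting of vertex-disjoint copies of $K_k$. *)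

From mathcomp Require Import all_boot all_order all_algebra.
Set Implicit Arguments. Unset Strict Implicit. Unset Printing Implicit Defensive.

Definition simple_graph (n : nat) (E : rel 'I_n) : Prop :=
  (forall i j, E i j = E j i) /\ (forall i, E i i = false).

Definition nbhd (n : nat) (E : rel 'I_n) (i : 'I_n) : {set 'I_n} := [set j | E i j].

(* A K_k-factor Q of E, given by the map q sending each vertex to the index
   s of the clique Q^s containing it (indices in 'I_(n %/ k), i.e. [n/k]):
   every class has exactly k vertices, and any two distinct vertices in the
   same class are adjacent in E (so each Q^s is a copy of K_k in E). *)
Definition is_Kk_factor (n k : nat) (E : rel 'I_n) (q : 'I_n -> 'I_(n %/ k)) : Prop :=
  (forall s, #|[set j | q j == s]| = k) /\
  (forall i j, i != j -> q i = q j -> E i j).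

Definition NQ (n k : nat) (q : 'I_n -> 'I_(n %/ k)) (j : 'I_n) : {set 'I_n} :=
  [set j' | (j' != j) && (q j' == q j)].

Definition Darc (n k : nat) (E : rel 'I_n) (q : 'I_n -> 'I_(n %/ k)) : rel 'I_n :=
  fun i j => (i != j) && (NQ q j \subset nbhd E i).

(** Call a vertex [i] complete to the clique [Q^s] if [Q^s] lies in [N_R(i)],
    and almost complete if it misses at most one vertex of it.  If [i] is
    complete to [Q^s] then [i -> j] for every [j] in [Q^s]; if [i] is almost
    complete then it reaches the vertex of [Q^s] it misses (or any vertex).
    Counting the excess of [deg i] over [(k - 2) r/k] shows that every vertex
    is complete or almost complete to at least [r/k + 6] cliques, counted with
    multiplicity; hence for any two vertices [u], [v] some clique is complete to
    one and almost complete to the other, and [u], [v] have a common out-reach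
    in [D].  A vertex [v] with the smallest out-reach is then reached from
    every vertex, and [v] is complete to at least six cliques, whose vertices
    are all reached from everywhere. *)

From mathcomp Require Import all_boot all_order all_algebra.
From mathcomp Require Import zify ring lra.
Import Order.TTheory GRing.Theory Num.Theory.
Set Implicit Arguments. Unset Strict Implicit.

Lemma connect_joinable_bottom (T : finType) (e : rel T) (x0 : T) :
  (forall u v, exists w, connect e u w && connect e v w) ->
  exists v, forall u w, connect e v w -> connect e u w.
Proof.
move=> joinable; pose reach u := [set w | connect e u w].
have [v _ min_v] := arg_minnP (fun u => #|reach u|) (isT : predT x0).
exists v => u w vw; have [x /andP[ux vx]] := joinable u v.
have reach_xv : reach x \subset reach v.
  by apply/subsetP => y; rewrite !inE; apply: connect_trans.
have /eqP reach_x : reach x == reach v.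
  by rewrite eqEcard reach_xv min_v.
have : w \in reach x by rewrite reach_x inE.
by rewrite inE; apply: connect_trans.
Qed.

Section CliqueFactor.
Variables (n k : nat) (E : rel 'I_n) (q : 'I_n -> 'I_(n %/ k)).

Definition clique s := [set j | q j == s].

Definition weight i s :=
  (clique s \subset nbhd E i) + (k.-1 <= #|nbhd E i :&: clique s|).

Hypothesis E_irrefl : irreflexive E.
Hypothesis card_clique : forall s, #|clique s| = k.
Hypothesis k_gt0 : 0 < k.

Local Notation D := (Darc E q).

Lemma NQE j : NQ q j = clique (q j) :\ j.
Proof. by apply/setP => x; rewrite !inE. Qed.

Lemma Darc_complete i s j :
  clique s \subset nbhd E i -> q j = s -> D i j.
Proof.
move=> complete qj; have Eij : E i j by rewrite -inE (subsetP complete) ?inE ?qj.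
rewrite /Darc NQE qj (subset_trans (subD1set _ _) complete) andbT.
by apply: contraTneq Eij => ->; rewrite E_irrefl.
Qed.

Lemma almost_complete_witness i s :
  k.-1 <= #|nbhd E i :&: clique s| ->
  exists2 j, q j = s & clique s :\ j \subset nbhd E i.
Proof.
move=> almost; have [complete | /subsetPn[j Cj Nj]] := boolP (clique s \subset nbhd E i).
  have /card_gt0P[j Cj] : 0 < #|clique s| by rewrite card_clique.
  exists j; first by move: Cj; rewrite inE => /eqP.
  exact: subset_trans (subD1set _ _) complete.
exists j; first by move: Cj; rewrite inE => /eqP.
have sub : nbhd E i :&: clique s \subset clique s :\ j.
  apply/subsetP => x; rewrite !inE => /andP[Eix ->]; rewrite andbT.
  by apply: contraTneq Eix => ->; move: Nj; rewrite inE.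
suff <- : nbhd E i :&: clique s = clique s :\ j by apply: subsetIl.
apply/eqP; rewrite eqEcard sub /=.
by move: almost; rewrite -(card_clique s) (cardsD1 j) Cj.
Qed.

Lemma connect_almost_complete i s :
  k.-1 <= #|nbhd E i :&: clique s| -> exists2 j, q j = s & connect D i j.
Proof.
move=> /almost_complete_witness[j qj sub]; exists j => //.
have [-> | ij] := eqVneq i j; first exact: connect0.
by apply: connect1; rewrite /Darc ij NQE qj.
Qed.

Lemma weight_le i s : weight i s <= 1 + (clique s \subset nbhd E i).
Proof. by rewrite /weight addnC leq_add2r leq_b1. Qed.

Lemma almost_of_weight i s :
  0 < weight i s -> k.-1 <= #|nbhd E i :&: clique s|.
Proof.
rewrite /weight; have [complete _ | _] := boolP (clique s \subset nbhd E i).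
  by rewrite (setIidPr complete) card_clique leq_pred.
by rewrite add0n lt0b.
Qed.

Lemma joinable_of_weight u v s :
  2 < weight u s + weight v s -> exists w, connect D u w && connect D v w.
Proof.
have join x y : clique s \subset nbhd E x -> 0 < weight y s ->
    exists w, connect D x w && connect D y w.
  move=> complete /almost_of_weight/connect_almost_complete[j qj yj].
  by exists j; rewrite yj andbT connect1 // (Darc_complete complete).
move=> heavy; have wu := weight_le u s; have wv := weight_le v s.
have [cu | /negbTE ncu] := boolP (clique s \subset nbhd E u).
  by apply: (join u v cu); rewrite cu in wu; lia.
have [cv | /negbTE ncv] := boolP (clique s \subset nbhd E v).
  by have [|w] := join v u cv; [rewrite cv in wv; lia | rewrite andbC; exists w].
by rewrite ncu in wu; rewrite ncv in wv; lia.
Qed.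

Lemma card_sum_clique (A : {set 'I_n}) : #|A| = \sum_s #|A :&: clique s|.
Proof.
rewrite -sum1_card (partition_big q xpredT) //=; apply: eq_bigr => s _.
by rewrite -sum1_card; apply: eq_bigl => j; rewrite !inE.
Qed.

Lemma card_nbhd_clique_weight i s :
  #|nbhd E i :&: clique s| + 2 <= k + weight i s.
Proof.
rewrite /weight; have [complete | ncomplete] := boolP (clique s \subset nbhd E i).
  by rewrite (setIidPr complete) card_clique leq_pred addn2.
have : #|nbhd E i :&: clique s| < k.
  by rewrite -(card_clique s) proper_card // properE subsetIr subsetI subxx andbT.
by case: leqP => /=; lia.
Qed.

Lemma card_nbhd_weight i : #|nbhd E i| + 2 * (n %/ k) <= n + \sum_s weight i s.
Proof.
have sum_k : \sum_(s : 'I_(n %/ k)) k = n.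
  transitivity #|[set: 'I_n]|; last by rewrite cardsT card_ord.
  by rewrite card_sum_clique; apply: eq_bigr => s _; rewrite setTI card_clique.
have sum_2 : \sum_(s : 'I_(n %/ k)) 2 = 2 * (n %/ k).
  by rewrite sum_nat_const card_ord mulnC.
have : \sum_s (#|nbhd E i :&: clique s| + 2) <= \sum_s (k + weight i s).
  by apply: leq_sum => s _; apply: card_nbhd_clique_weight.
by rewrite big_split [X in _ <= X]big_split /= -card_sum_clique sum_k sum_2.
Qed.

Lemma weight_sum_le i :
  \sum_s weight i s <= n %/ k + #|[set s | clique s \subset nbhd E i]|.
Proof.
have sum_1 : \sum_(s : 'I_(n %/ k)) 1 = n %/ k.
  by rewrite sum_nat_const card_ord muln1.
have sum_complete :
    \sum_s (clique s \subset nbhd E i) = #|[set s | clique s \subset nbhd E i]|.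
  rewrite -sum1_card [RHS]big_mkcond; apply: eq_bigr => s _.
  by rewrite inE; case: (_ \subset _).
have : \sum_s weight i s <= \sum_(s : 'I_(n %/ k)) 1 + \sum_s (clique s \subset nbhd E i).
  by rewrite -big_split; apply: leq_sum => s _; apply: weight_le.
by rewrite sum_1 sum_complete.
Qed.

End CliqueFactor.

Local Open Scope ring_scope.

Lemma min_degree_excess (F : realFieldType) (k m d w : nat) (eps : F) :
  (0 < k)%N -> 0 < eps -> 6 / eps <= (m * k)%:R ->
  (1 - k%:R^-1 + eps) * (m * k)%:R <= d%:R -> (d + 2 * m <= m * k + w)%N ->
  (m + 6 <= w)%N.
Proof.
move=> k_gt0 eps_gt0 large min_deg count.
have six : 6 <= eps * (m * k)%:R by rewrite mulrC -ler_pdivrMr.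
have k_neq0 : k%:R != 0 :> F by rewrite pnatr_eq0 -lt0n.
have split_deg :
    (1 - k%:R^-1 + eps) * (m * k)%:R = (m * k)%:R - m%:R + eps * (m * k)%:R.
  by rewrite natrM; field.
rewrite split_deg in min_deg; rewrite -(ler_nat F) natrD.
move: count; rewrite -(ler_nat F) !natrD; lra.
Qed.

Theorem claim5p2 (F : realFieldType) (k r : nat) (eps : F)
    (R : rel 'I_r) (q : 'I_r -> 'I_(r %/ k)) :
  (2 <= k)%N -> 0 < eps -> (k %| r)%N -> 6 / eps <= r%:R ->
  simple_graph R ->
  (forall i : 'I_r, (1 - k%:R^-1 + eps) * r%:R <= #|nbhd R i|%:R) ->
  @is_Kk_factor r k R q ->
  exists s1 s2 : 'I_(r %/ k), s1 != s2 /\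
    (forall s, s \in [:: s1; s2] ->
       forall j : 'I_r, q j = s ->
       forall i : 'I_r, i != j -> connect (Darc R q) i j).
Proof.
move=> k_ge2 eps_gt0 k_dvd_r r_large [_ R_irrefl] min_deg [card_clique _].
have k_gt0 : (0 < k)%N by apply: leq_trans k_ge2.
have excess i : (r %/ k + 6 <= \sum_s weight R q i s)%N.
  apply: (min_degree_excess (d := #|nbhd R i|) k_gt0 eps_gt0);
    rewrite ?divnK //.
  exact: card_nbhd_weight.
have joinable u v : exists w, connect (Darc R q) u w && connect (Darc R q) v w.
  have [/existsP[s uv] | /existsPn le2] :=
    boolP [exists s, 2 < weight R q u s + weight R q v s]%N.
    exact: joinable_of_weight uv.
  have : (\sum_s weight R q u s + \sum_s weight R q v s <= \sum_(s : 'I_(r %/ k)) 2)%N.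
    by rewrite -big_split; apply: leq_sum => s _; rewrite leqNgt le2.
  by rewrite sum_nat_const card_ord; have := excess u; have := excess v; lia.
have r_gt0 : (0 < r)%N.
  by rewrite -(ltr0n F) (lt_le_trans _ r_large) // divr_gt0.
have [v v_bottom] := connect_joinable_bottom (Ordinal r_gt0) joinable.
have : (1 < #|[set s | clique q s \subset nbhd R v]|)%N.
  by have := weight_sum_le R q v; have := excess v; lia.
case/card_gt1P => s1 [s2 []]; rewrite !inE => complete1 complete2 s12.
exists s1, s2; split=> // s; rewrite !inE => /orP[] /eqP -> j qj i _.
all: apply: v_bottom; apply: connect1.
  exact: (Darc_complete (k := k) R_irrefl complete1 qj).
exact: (Darc_complete (k := k) R_irrefl complete2 qj).
Qed.
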